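(* Let $\rho\in[0,1)$. The nonlinear process started from $\eta(0)\sim\pi_\rho$ has the same law as the M/D/1 queue with arrival rate $\rho$ started from its stationary distribution $\pi_\rho$; in particular $\rho(t)=\rho$ for all $t$ and the nonlinear process is stationary. Conversely, if the nonlinear process (with arbitrary initial law on $\mathbb{Z}_+$) is stationary, then $\eta(0)\sim\pi_{\rho}$ for some $\rho\in[0,1)$ (namely $\rho=\mathbb{P}(\eta(0)>0)$).
   Context: The nonlinear process $(\eta(t))_{t\in\mathbb{Z}_+}$ takes values in $\mathbb{Z}_+$: $\eta(0)$ has a given distribution; given $\eta(t)$, set $\rho(t):=\mathbb{P}(\eta(t)>0)$, let $N_{t+1}$ be Poisson with mean $\rho(t)$ (mean $0$ meaning identically $0$), independent of everything before, and set $\eta(t+1):=\eta(t)-\mathbf{1}(\eta(t)>0)+N_{t+1}$. The M/D/1 queue with arrival rate $\rho\ge 0$ is the Markov chain $(\zeta(t))_{t\in\mathbb{Z}_+}$ on $\mathbb{Z}_+$ given by $\zeta(t+1):=\zeta(t)-\mathbf{1}(\zeta(t)>0)+M_{t+1}$, where $(M_t)_{t\ge1}$ are i.i.d. Poisson random variables with mean $\rho$, independent of $\zeta(0)$. For $\rho<1$ this chain is irreducible, aperiodic and positive recurrent; $\pi_\rho$ denotes its unique invariant probability measure. *)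

(* Reals. Laws on Z_+ are represented by probability mass
   functions nat -> R; process laws by their finite-dimensional distributions. *)
From Stdlib Require Import Reals List Arith.
Open Scope R_scope.

(* Poisson(lam) mass function; lam = 0 gives the point mass at 0 (0^0 = 1). *)
Definition poisson (lam : R) (k : nat) : R :=
  exp (- lam) * lam ^ k / INR (fact k).

(* Transition kernel of the M/D/1 queue with arrival rate lam:
   y = x - 1(x>0) + N, N ~ Poisson(lam); note x - 1(x>0) = pred x. *)
Definition md1_kernel (lam : R) (x y : nat) : R :=
  if Nat.leb (Nat.pred x) y then poisson lam (y - Nat.pred x)%nat else 0.

Definition is_prob (mu : nat -> R) : Prop :=
  (forall n, 0 <= mu n) /\ infinite_sum mu 1.

(* P(eta > 0) for eta ~ mu (mu a probability distribution). *)
Definition rho_of (mu : nat -> R) : R := 1 - mu 0%nat.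

(* One step of a law under the kernel with rate lam.  The kernel from x to y
   vanishes unless x <= y+1, so the sum over x is finite. *)
Definition step (lam : R) (mu : nat -> R) (y : nat) : R :=
  sum_f_R0 (fun x => mu x * md1_kernel lam x y) (S y).

(* Marginal law of eta(t) for the nonlinear process started from mu0:
   rho(t) = P(eta(t) > 0) is the rate used at step t -> t+1. *)
Fixpoint marg (mu0 : nat -> R) (t : nat) : nat -> R :=
  match t with
  | O => mu0
  | S t' => step (rho_of (marg mu0 t')) (marg mu0 t')
  end.

Fixpoint path_prob (r : nat -> R) (k : nat) (x : nat) (ys : list nat) : R :=
  match ys with
  | nil => 1
  | y :: ys' => md1_kernel (r k) x y * path_prob r (S k) y ys'
  end.

Definition nl_fdd (mu0 : nat -> R) (s : nat) (x0 : nat) (ys : list nat) : R :=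
  marg mu0 s x0 * path_prob (fun k => rho_of (marg mu0 k)) s x0 ys.

Definition md1_fdd (rho : R) (mu0 : nat -> R) (x0 : nat) (ys : list nat) : R :=
  mu0 x0 * path_prob (fun _ => rho) O x0 ys.

Definition nl_stationary (mu0 : nat -> R) : Prop :=
  forall (s x0 : nat) (ys : list nat), nl_fdd mu0 s x0 ys = nl_fdd mu0 O x0 ys.

(* pi is an invariant probability measure of the M/D/1 queue with rate rho
   (for rho < 1 this is the unique such measure, pi_rho). *)
Definition md1_invariant (rho : R) (pi : nat -> R) : Prop :=
  is_prob pi /\ forall y, step rho pi y = pi y.

(* Invariance of pi under the queue with rate r forces pi(0) = 1 - r: in
   equilibrium the departure rate P(eta > 0) equals the arrival rate.  Since pi
   may have infinite mean, this balance is obtained in truncated form: with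
   A ~ Poisson(r) and X ~ pi, invariance gives
     sum_(x <= K+1) pi(x) E[min(A, K+1 - pred x)] = P(X <= K+1) - pi(0),
   and the bounds r P(A <= m) <= E[min(A, m+2)] and E[min(A, j+1)] <= r let
   K tend to infinity.  Hence rho(t) = r at every time, the marginals never move, and the
   nonlinear process is the stationary queue.  Conversely, stationarity makes
   eta(0) invariant for the rate rho(0), and rho(0) = 1 is impossible because
   an invariant law with no mass at 0 vanishes identically. *)
From Stdlib Require Import Reals Arith Lia Lra FunctionalExtensionality.
Open Scope R_scope.

Lemma Un_cv_const (c : R) : Un_cv (fun _ => c) c.
Proof. intros e He; exists 0%nat; intros; unfold R_dist; rewrite Rminus_diag, Rabs_R0; lra. Qed.

Lemma Un_cv_scal (u : nat -> R) (l c : R) : Un_cv u l -> Un_cv (fun n => c * u n) (c * l).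
Proof. intro Hu. apply (CV_mult (fun _ => c) u); [apply Un_cv_const | exact Hu]. Qed.

Lemma Un_cv_le_const (u : nat -> R) (l c : R) : Un_cv u l -> (forall n, u n <= c) -> l <= c.
Proof. intros Hu Hb. apply (@Rle_cv_lim u (fun _ => c)); auto using Un_cv_const. Qed.

Lemma sum_f_R0_le_nonneg (f : nat -> R) (a b : nat) :
  (forall n, 0 <= f n) -> (a <= b)%nat -> sum_f_R0 f a <= sum_f_R0 f b.
Proof.
  intros Hf Hab; induction Hab as [|b _ IH]; [lra|].
  rewrite tech5; specialize (Hf (S b)); lra.
Qed.

Definition poisson_cdf (r : R) (j : nat) : R := sum_f_R0 (poisson r) j.

(* E[min(A, j+1)] for A ~ Poisson(r), written as the sum of the tails P(A > i), i <= j. *)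
Definition poisson_trunc_mean (r : R) (j : nat) : R :=
  sum_f_R0 (fun i => 1 - poisson_cdf r i) j.

Section Poisson.
Variable r : R.
Hypothesis r_nonneg : 0 <= r.

Lemma poisson_nonneg (k : nat) : 0 <= poisson r k.
Proof.
  unfold poisson; apply Rmult_le_pos; [apply Rmult_le_pos|].
  - left; apply exp_pos.
  - apply pow_le, r_nonneg.
  - left; apply Rinv_0_lt_compat, INR_fact_lt_0.
Qed.

Lemma poisson_succ (k : nat) : INR (S k) * poisson r (S k) = r * poisson r k.
Proof.
  unfold poisson; rewrite fact_simpl, mult_INR; simpl pow.
  assert (INR (S k) <> 0) by (apply not_0_INR; lia).
  assert (INR (fact k) <> 0) by apply INR_fact_neq_0.
  field; auto.
Qed.

Lemma poisson_cdf_cv : Un_cv (poisson_cdf r) 1.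
Proof.
  assert (Hexp : exp_in r (exp r)) by (unfold exp; destruct (exist_exp r); auto).
  replace 1 with (exp (- r) * exp r)
    by (rewrite exp_Ropp; field; apply Rgt_not_eq, exp_pos).
  eapply Un_cv_ext; [|exact (Un_cv_scal _ _ (exp (- r)) Hexp)].
  intro n; unfold poisson_cdf; rewrite scal_sum; apply sum_eq.
  intros i _; unfold poisson, Rdiv; ring.
Qed.

Lemma poisson_cdf_le_1 (j : nat) : poisson_cdf r j <= 1.
Proof. apply (sum_incr _ _ _ poisson_cdf_cv poisson_nonneg). Qed.

Lemma poisson_trunc_mean_closed (m : nat) :
  poisson_trunc_mean r m
  = INR (S m) * (1 - poisson_cdf r m) + r * (poisson_cdf r m - poisson r m).
Proof.
  induction m as [|m IH].
  - unfold poisson_trunc_mean, poisson_cdf; simpl; ring.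
  - unfold poisson_trunc_mean in *; rewrite tech5, IH.
    unfold poisson_cdf; rewrite tech5; fold (poisson_cdf r m).
    generalize (poisson_succ m); rewrite !S_INR; intro; nra.
Qed.

(* Summed form of (m+1) P(A = k+1) <= (k+1) P(A = k+1) = r P(A = k) over k >= m. *)
Lemma poisson_tail_weighted (m d : nat) :
  INR (S m) * (poisson_cdf r (d + S m) - poisson_cdf r m)
  <= r * (poisson_cdf r (d + m) - poisson_cdf r m + poisson r m).
Proof.
  induction d as [|d IH].
  - unfold poisson_cdf at 1; simpl plus; rewrite tech5; fold (poisson_cdf r m).
    rewrite Rplus_minus_l, poisson_succ; lra.
  - change (S d + S m)%nat with (S (d + S m)); change (S d + m)%nat with (S (d + m)).
    rewrite Nat.add_succ_r in *; set (n := (d + m)%nat) in *.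
    assert (Hcdf : forall j, poisson_cdf r (S j) = poisson_cdf r j + poisson r (S j))
      by (intro; apply tech5).
    assert (INR (S m) * poisson r (S (S n)) <= r * poisson r (S n)).
    { rewrite <- poisson_succ; apply Rmult_le_compat_r; [apply poisson_nonneg|].
      apply le_INR; unfold n; lia. }
    rewrite Hcdf in IH |- *; rewrite (Hcdf n); nra.
Qed.

Lemma poisson_cdf_shift_cv (k : nat) (c : R) :
  Un_cv (fun d => poisson_cdf r (d + k) - c) (1 - c).
Proof. apply CV_minus; [apply CV_shift', poisson_cdf_cv | apply Un_cv_const]. Qed.

Lemma poisson_trunc_mean_le (m : nat) : poisson_trunc_mean r m <= r.
Proof.
  rewrite poisson_trunc_mean_closed.
  assert (INR (S m) * (1 - poisson_cdf r m) <= r * (1 - poisson_cdf r m + poisson r m)).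
  { apply (Rle_cv_lim (poisson_tail_weighted m)).
    - apply Un_cv_scal, poisson_cdf_shift_cv.
    - replace (1 - poisson_cdf r m + poisson r m)
        with (1 - (poisson_cdf r m - poisson r m)) by ring.
      apply Un_cv_scal.
      apply (Un_cv_ext (fun d => poisson_cdf r (d + m) - (poisson_cdf r m - poisson r m)));
        [intro; ring | apply poisson_cdf_shift_cv]. }
  lra.
Qed.

Lemma poisson_trunc_mean_ge (m : nat) : r * poisson_cdf r m <= poisson_trunc_mean r (S m).
Proof.
  rewrite poisson_trunc_mean_closed.
  assert (0 <= INR (S (S m)) * (1 - poisson_cdf r (S m))).
  { apply Rmult_le_pos; [apply pos_INR|]; generalize (poisson_cdf_le_1 (S m)); lra. }
  unfold poisson_cdf in *; rewrite tech5 in *; lra.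
Qed.

Lemma poisson_trunc_mean_nonneg (j : nat) : 0 <= poisson_trunc_mean r j.
Proof. apply cond_pos_sum; intro i; generalize (poisson_cdf_le_1 i); lra. Qed.

Lemma poisson_trunc_mean_le_mono (a b : nat) :
  (a <= b)%nat -> poisson_trunc_mean r a <= poisson_trunc_mean r b.
Proof.
  apply sum_f_R0_le_nonneg; intro i; generalize (poisson_cdf_le_1 i); lra.
Qed.

End Poisson.

Lemma md1_kernel_reachable (r : R) (x y : nat) :
  (x <= S y)%nat -> md1_kernel r x y = poisson r (y - pred x).
Proof.
  intro Hxy; unfold md1_kernel.
  replace (Nat.leb (pred x) y) with true; [reflexivity|].
  symmetry; apply Nat.leb_le; lia.
Qed.

Lemma step_cdf (r : R) (mu : nat -> R) (K : nat) :
  sum_f_R0 (fun x => mu x * poisson_cdf r (K - pred x)) (S K) = sum_f_R0 (step r mu) K.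
Proof.
  induction K as [|K IH].
  - unfold step, md1_kernel, poisson_cdf; simpl; ring.
  - rewrite tech5, (tech5 (step r mu)), <- IH.
    unfold step; rewrite (tech5 (fun x => mu x * md1_kernel r x (S K))).
    rewrite (sum_eq (fun x => mu x * poisson_cdf r (S K - pred x))
       (fun x => mu x * poisson_cdf r (K - pred x) + mu x * poisson r (S K - pred x))).
    2:{ intros i Hi; replace (S K - pred i)%nat with (S (K - pred i)) by lia.
        unfold poisson_cdf; rewrite tech5; ring. }
    rewrite plus_sum.
    rewrite (sum_eq (fun x => mu x * md1_kernel r x (S K))
                    (fun x => mu x * poisson r (S K - pred x))).
    2:{ intros i Hi; rewrite md1_kernel_reachable by lia; reflexivity. }
    rewrite md1_kernel_reachable by lia.
    replace (S K - pred (S (S K)))%nat with 0%nat by (simpl; lia).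
    unfold poisson_cdf; simpl; ring.
Qed.

Section Invariant.
Variable r : R.
Variable pi : nat -> R.
Hypothesis pi_invariant : forall y, step r pi y = pi y.

Lemma invariant_cdf (K : nat) :
  sum_f_R0 (fun x => pi x * poisson_cdf r (K - pred x)) (S K) = sum_f_R0 pi K.
Proof. rewrite step_cdf; apply sum_eq; auto. Qed.

(* Summing [invariant_cdf] over K turns the cdf of A into E[min(A, _)]. *)
Lemma invariant_flux_balance (K : nat) :
  sum_f_R0 (fun x => pi x * poisson_trunc_mean r (K - pred x)) (S K)
  = sum_f_R0 pi (S K) - pi 0%nat.
Proof.
  induction K as [|K IH].
  - generalize (invariant_cdf 0); unfold poisson_trunc_mean, poisson_cdf; simpl; lra.
  - rewrite tech5, (tech5 pi (S K)).
    rewrite (sum_eq (fun x => pi x * poisson_trunc_mean r (S K - pred x))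
       (fun x => pi x * poisson_trunc_mean r (K - pred x)
                 + (pi x - pi x * poisson_cdf r (S K - pred x)))).
    2:{ intros i Hi; replace (S K - pred i)%nat with (S (K - pred i)) by lia.
        unfold poisson_trunc_mean; rewrite tech5; ring. }
    rewrite plus_sum, minus_sum, IH.
    generalize (invariant_cdf (S K)); rewrite tech5.
    replace (S K - pred (S (S K)))%nat with 0%nat by (simpl; lia).
    unfold poisson_trunc_mean, poisson_cdf; simpl sum_f_R0; lra.
Qed.

Hypothesis r_nonneg : 0 <= r.
Hypothesis pi_prob : is_prob pi.

Lemma invariant_mass0_ge : 1 - r <= pi 0%nat.
Proof.
  destruct pi_prob as [pi_nonneg pi_sum].
  assert (Hbound : forall K, (1 - r) * sum_f_R0 pi (S K) <= pi 0%nat).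
  { intro K; generalize (invariant_flux_balance K).
    assert (sum_f_R0 (fun x => pi x * poisson_trunc_mean r (K - pred x)) (S K)
            <= r * sum_f_R0 pi (S K)).
    { rewrite scal_sum; apply sum_Rle; intros n _.
      apply Rmult_le_compat_l; auto using poisson_trunc_mean_le. }
    lra. }
  replace (1 - r) with ((1 - r) * 1) by ring.
  apply (Un_cv_le_const _ _ _ (Un_cv_scal _ _ (1 - r) (CV_shift' _ 1 _ pi_sum))).
  intro K; rewrite Nat.add_1_r; apply Hbound.
Qed.

Lemma invariant_mass0_le : pi 0%nat <= 1 - r.
Proof.
  destruct pi_prob as [pi_nonneg pi_sum].
  assert (Hbound : forall m L, r * poisson_cdf r m * sum_f_R0 pi L <= 1 - pi 0%nat).
  { intros m L; set (K := (S m + L)%nat).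
    generalize (invariant_flux_balance K); intro Hflux.
    assert (sum_f_R0 pi (S K) <= 1) by (apply sum_incr; auto).
    assert (sum_f_R0 (fun x => pi x * poisson_trunc_mean r (K - pred x)) L
            <= sum_f_R0 (fun x => pi x * poisson_trunc_mean r (K - pred x)) (S K)).
    { apply sum_f_R0_le_nonneg; [|unfold K; lia].
      intro n; apply Rmult_le_pos; auto using poisson_trunc_mean_nonneg. }
    assert (poisson_trunc_mean r (S m) * sum_f_R0 pi L
            <= sum_f_R0 (fun x => pi x * poisson_trunc_mean r (K - pred x)) L).
    { rewrite scal_sum; apply sum_Rle; intros n Hn.
      apply Rmult_le_compat_l; auto.
      apply poisson_trunc_mean_le_mono; [assumption | unfold K; lia]. }
    assert (r * poisson_cdf r m * sum_f_R0 pi L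
            <= poisson_trunc_mean r (S m) * sum_f_R0 pi L).
    { apply Rmult_le_compat_r; [apply cond_pos_sum; auto|].
      apply poisson_trunc_mean_ge; auto. }
    lra. }
  assert (Hmass : forall L, r * sum_f_R0 pi L <= 1 - pi 0%nat).
  { intro L; replace (r * sum_f_R0 pi L) with (r * sum_f_R0 pi L * 1) by ring.
    apply (Un_cv_le_const _ _ _ (Un_cv_scal _ _ _ (poisson_cdf_cv r))).
    intro m; rewrite <- (Hbound m L); right; ring. }
  enough (r <= 1 - pi 0%nat) by lra.
  replace r with (r * 1) by ring.
  exact (Un_cv_le_const _ _ _ (Un_cv_scal _ _ r pi_sum) Hmass).
Qed.

Lemma invariant_rho_of : rho_of pi = r.
Proof. unfold rho_of; generalize invariant_mass0_ge invariant_mass0_le; lra. Qed.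

End Invariant.

Lemma invariant_vanishes_of_mass0 (r : R) (mu : nat -> R) :
  (forall y, step r mu y = mu y) -> mu 0%nat = 0 -> forall x, mu x = 0.
Proof.
  intros Hinv H0.
  enough (Hbelow : forall y x, (x <= y)%nat -> mu x = 0) by (intro x; exact (Hbelow x x (le_n x))).
  induction y as [|y IH]; intros x Hx.
  - replace x with 0%nat by lia; exact H0.
  - destruct (Nat.eq_dec x (S y)) as [->|]; [|apply IH; lia].
    generalize (Hinv y); unfold step; rewrite tech5.
    rewrite (sum_eq _ (fun _ => 0 * 0)) by (intros i Hi; rewrite (IH i Hi); ring).
    rewrite <- scal_sum, Rmult_0_l, (IH y (le_n y)), md1_kernel_reachable by lia.
    replace (y - pred (S y))%nat with 0%nat by (simpl; lia).
    assert (0 < poisson r 0).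
    { unfold poisson; simpl; rewrite Rmult_1_r, Rdiv_1_r; apply exp_pos. }
    nra.
Qed.

Lemma is_prob_not_null (mu : nat -> R) : is_prob mu -> ~ (forall x, mu x = 0).
Proof.
  intros [_ Hsum] Hnull.
  enough (1 = 0) by lra.
  apply (UL_sequence (sum_f_R0 mu)); [exact Hsum|].
  eapply Un_cv_ext; [|apply Un_cv_const].
  intro n; rewrite (sum_eq _ (fun _ => 0 * 0)) by (intros; rewrite Hnull; ring).
  rewrite <- scal_sum; ring.
Qed.

Lemma marg_fixed_point (mu : nat -> R) :
  (forall y, step (rho_of mu) mu y = mu y) -> forall t, marg mu t = mu.
Proof.
  intros Hinv t; induction t as [|t IH]; [reflexivity|].
  simpl; rewrite IH; apply functional_extensionality, Hinv.
Qed.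

Lemma path_prob_const_rate (c : R) (k k' x : nat) (ys : list nat) :
  path_prob (fun _ => c) k x ys = path_prob (fun _ => c) k' x ys.
Proof.
  revert k k' x; induction ys as [|y ys IH]; intros k k' x; simpl; [reflexivity|].
  rewrite (IH (S k) (S k')); reflexivity.
Qed.

Lemma nl_fdd_fixed_point (mu : nat -> R) :
  (forall y, step (rho_of mu) mu y = mu y) ->
  forall s x0 ys, nl_fdd mu s x0 ys = md1_fdd (rho_of mu) mu x0 ys.
Proof.
  intros Hinv s x0 ys; unfold nl_fdd, md1_fdd.
  rewrite (marg_fixed_point mu Hinv s).
  replace (fun k => rho_of (marg mu k)) with (fun _ : nat => rho_of mu)
    by (apply functional_extensionality; intro k; rewrite (marg_fixed_point mu Hinv k); reflexivity).
  rewrite (path_prob_const_rate _ s 0); reflexivity.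
Qed.

Lemma stationary_invariant (mu : nat -> R) :
  nl_stationary mu -> forall y, step (rho_of mu) mu y = mu y.
Proof. intros Hst y; generalize (Hst 1%nat y nil); unfold nl_fdd; simpl; lra. Qed.

Theorem lemma2p3 :
  (forall (rho : R) (pi : nat -> R),
      0 <= rho < 1 -> md1_invariant rho pi ->
      (forall (x0 : nat) (ys : list nat), nl_fdd pi O x0 ys = md1_fdd rho pi x0 ys)
      /\ (forall t : nat, rho_of (marg pi t) = rho)
      /\ nl_stationary pi)
  /\
  (forall mu0 : nat -> R,
      is_prob mu0 -> nl_stationary mu0 ->
      0 <= rho_of mu0 < 1 /\ md1_invariant (rho_of mu0) mu0).
Proof.
  split.
  - intros rho pi [rho_nonneg _] [pi_prob pi_inv].
    assert (Hrho : rho_of pi = rho) by exact (invariant_rho_of rho pi pi_inv rho_nonneg pi_prob).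
    rewrite <- Hrho in pi_inv |- *.
    split; [|split].
    + apply nl_fdd_fixed_point, pi_inv.
    + intro t; rewrite (marg_fixed_point pi pi_inv t); reflexivity.
    + intros s x0 ys; rewrite !(nl_fdd_fixed_point pi pi_inv); reflexivity.
  - intros mu0 Hprob Hst.
    pose proof (stationary_invariant mu0 Hst) as Hinv.
    assert (mu0 0%nat <= 1)
      by (destruct Hprob as [Hnn Hsum]; exact (sum_incr mu0 0 1 Hsum Hnn)).
    assert (0 < mu0 0%nat).
    { destruct (proj1 Hprob 0%nat) as [|Hzero]; [assumption|].
      exfalso; apply (is_prob_not_null mu0 Hprob).
      exact (invariant_vanishes_of_mass0 _ _ Hinv (eq_sym Hzero)). }
    split; [unfold rho_of; lra | split; assumption].
Qed.
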